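(* Let $\beta<0$, $G_\beta(u)=-u^\beta$, $L\in\mathbb{N}$, $d>0$ and $u_0\in\mathcal{P}_{L,d}$. For $\delta>0$ let $u_{0,\delta}=u_0\vee\delta$ and let $u_\delta$ be a solution of $\partial_tu=\Delta G_\beta(u)$, $u(0)=u_{0,\delta}$, with $\delta\le u_\delta\le\|u_{0,\delta}\|_\infty$. Then there exist $t^*=t^*(\beta,L,d)>0$ and $C=C(\beta,L,d)$ such that $|u_\delta(t_2,k)-u_\delta(t_1,k)|\le C|t_2-t_1|^{\frac1{1-\beta}}$ for all $t_1,t_2\in[0,t^*]$, $k\in\mathbb{Z}$, and all $\delta>0$.
   Context: $\Delta v(k)=v(k-1)-2v(k)+v(k+1)$. $\sigma_+(u,k,d)=\inf\{l>k:u(l)\ge d\}$; $\mathcal{P}_{L,d}=\{u\in\ell^\infty_+(\mathbb{Z}):\sup_k(\sigma_+(u,k,d)-k)\le L\}$. A solution: $u\in C^0([0,\infty);\ell^\infty_+(\mathbb{Z}))$ with the initial datum, each $u(\cdot,k)\in C^1((0,\infty);(0,\infty))$ satisfying the equation pointwise. *)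

From Stdlib Require Import Reals ZArith.
From Coquelicot Require Import Coquelicot.
Open Scope R_scope.

Definition zseq := Z -> R.

Definition dlap (v : zseq) (k : Z) : R :=
  v (k - 1)%Z - 2 * v k + v (k + 1)%Z.

Definition Gb (beta u : R) : R := - Rpower u beta.

Definition linf_plus (v : zseq) : Prop :=
  (forall k, 0 <= v k) /\ exists M, forall k, Rabs (v k) <= M.

(* sup norm ||v||_∞ = sup_k |v(k)| (finite for bounded v) *)
Definition supnorm (v : zseq) : R :=
  real (Lub_Rbar (fun x => exists k, x = Rabs (v k))).

(* P_{L,d}: sup_k (σ_+(u,k,d) - k) <= L, where σ_+(u,k,d) = inf{l>k : u(l) >= d}
   (inf ∅ = +∞); unfolded: for each k some l in (k, k+L] has u(l) >= d. *)
Definition PLd (L : nat) (d : R) (u : zseq) : Prop :=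
  linf_plus u /\
  forall k : Z, exists l : Z, (k < l)%Z /\ (l <= k + Z.of_nat L)%Z /\ d <= u l.

Definition hpow (x a : R) : R := if Rle_dec x 0 then 0 else Rpower x a.

Definition is_solution (beta : R) (v0 : zseq) (u : R -> zseq) : Prop :=
  (forall t, 0 <= t -> linf_plus (u t)) /\
  (forall t, 0 <= t -> forall eps, 0 < eps -> exists eta, 0 < eta /\
      forall s, 0 <= s -> Rabs (s - t) < eta ->
        forall k, Rabs (u s k - u t k) <= eps) /\
  (forall k, u 0 k = v0 k) /\
  (forall k t, 0 < t ->
      0 < u t k /\
      is_derive (fun s => u s k) t (dlap (fun j => Gb beta (u t j)) k) /\
      continuous (fun s => Derive (fun r => u r k) s) t).

(* Write [hexp = 1 / (1 - beta)].  Upwards, [dlap (G_beta u) <= 2 u^beta] gives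
   [(u^(1-beta))' <= 2 (1 - beta)], and subadditivity of [x ^ hexp] turns this into
   [u(b) - u(a) <= (2 (1 - beta) (b - a))^hexp] at all times.  Downwards, comparison with an
   explicit subsolution (possible because [u0 >= d] somewhere in every [L] consecutive
   sites) gives [u(t) >= c t^hexp] for [t <= tstar], uniformly in [delta]; hence
   [u' >= -2 c^beta t^(hexp - 1)], which integrates to [u(b) - u(a) >= -C (b - a)^hexp]. *)

From Stdlib Require Import Reals ZArith Lra Lia.
From Coquelicot Require Import Coquelicot.
Open Scope R_scope.

Lemma derivable_pt_lim_Derive (f : R -> R) x df :
  is_derive f x df -> derivable_pt_lim f x (Derive f x).
Proof. intro H. rewrite (is_derive_unique f x df H). now apply is_derive_Reals. Qed.

Lemma increment_le_of_derive_le (f : R -> R) a b M : a <= b ->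
  (forall x, a <= x <= b -> exists df, is_derive f x df /\ df <= M) ->
  f b - f a <= M * (b - a).
Proof.
  intros Hab Hd. destruct (Req_dec a b) as [<-|Hne]; [lra|].
  destruct (MVT_cor2 f (Derive f) a b) as [c [Hc Hcab]]; [lra| |].
  { intros x Hx. destruct (Hd x Hx) as [df [H _]]. exact (derivable_pt_lim_Derive f x df H). }
  destruct (Hd c ltac:(lra)) as [df [H Hle]].
  rewrite Hc, (is_derive_unique f c df H). apply Rmult_le_compat_r; lra.
Qed.

Lemma increment_ge_of_derive_ge (f : R -> R) a b m : a <= b ->
  (forall x, a <= x <= b -> exists df, is_derive f x df /\ m <= df) ->
  m * (b - a) <= f b - f a.
Proof.
  intros Hab Hd.
  enough (- f b - - f a <= - m * (b - a)) by lra.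
  apply (increment_le_of_derive_le (fun x => - f x)); [exact Hab|].
  intros x Hx. destruct (Hd x Hx) as [df [H Hle]].
  exists (- df). split; [now apply (is_derive_opp f)|lra].
Qed.

Lemma last_nonpos_point (g : R -> R) a b : a <= b -> g a <= 0 ->
  (forall x, a <= x <= b -> continuity_pt g x) ->
  exists s, a <= s <= b /\ g s <= 0 /\ forall x, s < x <= b -> 0 < g x.
Proof.
  intros Hab Hga Hc.
  set (E := fun s => a <= s <= b /\ g s <= 0).
  destruct (completeness E) as [s [Hub Hlub]].
  { exists b. intros x [Hx _]. lra. }
  { exists a. split; [lra|exact Hga]. }
  assert (Has : a <= s) by (apply Hub; split; [lra|exact Hga]).
  assert (Hsb : s <= b) by (apply Hlub; intros x [Hx _]; lra).
  exists s. split; [lra|split].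
  - apply Rnot_lt_le. intro Hgs.
    destruct (Hc s (conj Has Hsb) (g s) Hgs) as [alp [Halp Hnear]].
    enough (s <= s - alp) by lra.
    apply Hlub. intros x [Hx Hgx]. apply Rnot_lt_le. intro Hxa.
    assert (x <= s) by (apply Hub; split; assumption).
    destruct (Req_dec x s) as [->|Hxs]; [lra|].
    assert (Hd : R_dist (g x) (g s) < g s).
    { apply Hnear. split; [split; [exact I|congruence]|].
      simpl. unfold R_dist. rewrite Rabs_left; lra. }
    unfold R_dist in Hd. apply Rabs_def2 in Hd. lra.
  - intros x Hx. apply Rnot_le_lt. intro Hgx.
    assert (x <= s) by (apply Hub; split; [lra|exact Hgx]). lra.
Qed.

Lemma increment_le_of_derive_le_where_pos (g : R -> R) a b M :
  a <= b -> 0 <= M -> g a <= 0 ->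
  (forall x, a <= x <= b -> exists dg, is_derive g x dg /\ (0 < g x -> dg <= M)) ->
  g b <= M * (b - a).
Proof.
  intros Hab HM Hga Hd.
  destruct (last_nonpos_point g a b Hab Hga) as [s [Hs [Hgs Hpos]]].
  { intros x Hx. destruct (Hd x Hx) as [dg [H _]].
    apply continuity_pt_filterlim, (ex_derive_continuous (V := R_NormedModule)).
    now exists dg. }
  destruct (Req_dec s b) as [<-|Hsb]; [nra|].
  destruct (MVT_cor2 g (Derive g) s b) as [c [Hc Hcs]]; [lra| |].
  { intros x Hx. destruct (Hd x ltac:(lra)) as [dg [H _]].
    exact (derivable_pt_lim_Derive g x dg H). }
  destruct (Hd c ltac:(lra)) as [dg [H Hle]].
  rewrite (is_derive_unique g c dg H) in Hc.
  specialize (Hle (Hpos c ltac:(lra))).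
  assert (dg * (b - s) <= M * (b - a)) by nra. lra.
Qed.

Lemma le_0_of_forall_le_div_pow2 x B : (forall m, x <= B / 2 ^ m) -> x <= 0.
Proof.
  intro H. apply Rnot_lt_le. intro Hx.
  destruct (Pow_x_infinity 2 ltac:(rewrite Rabs_pos_eq; lra) (B / x + 1)) as [N HN].
  specialize (HN N (le_n N)). rewrite Rabs_pos_eq in HN by (apply pow_le; lra).
  assert (H2 : 0 < 2 ^ N) by (apply pow_lt; lra).
  specialize (H N). apply (Rmult_le_compat_r (2 ^ N)) in H; [|lra].
  replace (B / 2 ^ N * 2 ^ N) with B in H by (field; lra).
  assert (x * (B / x + 1) <= x * 2 ^ N) by (apply Rmult_le_compat_l; lra).
  replace (x * (B / x + 1)) with (B + x) in * by (field; lra). lra.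
Qed.

Lemma le_of_forall_near (f : R -> R) x0 A (P : R -> Prop) :
  (forall eps, 0 < eps -> exists s, P s /\ Rabs (f s - f x0) <= eps) ->
  (forall s, P s -> f s <= A) -> f x0 <= A.
Proof.
  intros Hnear Hle. apply Rnot_lt_le. intro HA.
  destruct (Hnear ((f x0 - A) / 2) ltac:(lra)) as [s [Hs Habs]].
  specialize (Hle s Hs). apply Rabs_le_between in Habs. lra.
Qed.

Lemma Rpower_pos x a : 0 < Rpower x a.
Proof. apply exp_pos. Qed.

Lemma Rle_Rpower_l_nonpos x y a : a <= 0 -> 0 < x <= y -> Rpower y a <= Rpower x a.
Proof.
  intros Ha Hxy. rewrite <- (Ropp_involutive a), (Rpower_Ropp x), (Rpower_Ropp y).
  apply Rinv_le_contravar; [apply Rpower_pos|apply Rle_Rpower_l; lra].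
Qed.

Lemma Rle_Rpower_le_1 t a b : 0 < t <= 1 -> a <= b -> Rpower t b <= Rpower t a.
Proof.
  intros Ht Hab. unfold Rpower.
  assert (ln t <= 0) by (rewrite <- ln_1; apply ln_le; lra).
  assert (Hle : b * ln t <= a * ln t) by nra.
  destruct Hle as [Hlt|Heq]; [left; now apply exp_increasing|rewrite Heq; lra].
Qed.

Lemma Rpower_Rpower_inv x a : 0 < x -> a <> 0 -> Rpower (Rpower x (1 / a)) a = x.
Proof.
  intros. rewrite Rpower_mult. replace (1 / a * a) with 1 by (field; auto).
  now apply Rpower_1.
Qed.

Lemma Rpower_inv_Rpower x a : 0 < x -> a <> 0 -> Rpower (Rpower x a) (1 / a) = x.
Proof.
  intros. rewrite Rpower_mult. replace (a * (1 / a)) with 1 by (field; auto).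
  now apply Rpower_1.
Qed.

Lemma Rpower_le_of_le_root t e a : 0 < e -> 0 < a -> 0 < t <= Rpower e (1 / a) ->
  Rpower t a <= e.
Proof.
  intros He Ha Ht. rewrite <- (Rpower_Rpower_inv e a) by lra.
  apply Rle_Rpower_l; lra.
Qed.

Lemma Rpower_le_1_of_le_1 t a : 0 < t <= 1 -> 0 <= a -> Rpower t a <= 1.
Proof. intros. rewrite <- (Rpower_O t) by lra. apply Rle_Rpower_le_1; lra. Qed.

Lemma Rpower_ge_1_of_le_1 t a : 0 < t <= 1 -> a <= 0 -> 1 <= Rpower t a.
Proof. intros. rewrite <- (Rpower_O t) at 1 by lra. apply Rle_Rpower_le_1; lra. Qed.

Lemma Rpower_eventually_le a e : 0 < a -> 0 < e ->
  exists t0, 0 < t0 /\ forall t, 0 < t <= t0 -> Rpower t a <= e.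
Proof.
  intros Ha He. exists (Rpower e (1 / a)). split; [apply Rpower_pos|].
  intros t Ht. now apply Rpower_le_of_le_root.
Qed.

Lemma Rpower_mult_Rpower a t g b : 0 < a ->
  Rpower (a * Rpower t g) b = Rpower a b * Rpower t (g * b).
Proof.
  intro Ha. rewrite <- Rpower_mult_distr by (auto; apply Rpower_pos).
  now rewrite Rpower_mult.
Qed.

Lemma Rpower_plus_le x y g : 0 < x -> 0 < y -> g <= 1 ->
  Rpower (x + y) g <= Rpower x g + Rpower y g.
Proof.
  intros Hx Hy Hg.
  assert (Hsplit : forall z, 0 < z -> Rpower z g = z * Rpower z (g - 1)).
  { intros z Hz. rewrite <- (Rpower_1 z) at 2 by lra. rewrite <- Rpower_plus.
    f_equal. ring. }
  rewrite !Hsplit by lra.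
  assert (Rpower (x + y) (g - 1) <= Rpower x (g - 1)) by (apply Rle_Rpower_l_nonpos; lra).
  assert (Rpower (x + y) (g - 1) <= Rpower y (g - 1)) by (apply Rle_Rpower_l_nonpos; lra).
  nra.
Qed.

Lemma is_derive_Rpower x a : 0 < x ->
  is_derive (fun t => Rpower t a) x (a * Rpower x (a - 1)).
Proof. intro. apply is_derive_Reals. now apply derivable_pt_lim_power. Qed.

Lemma Rpower_neg_lipschitz beta eps a b D : beta < 0 -> 0 < eps ->
  eps <= a -> eps <= b -> 0 <= D -> b - a <= D ->
  Rpower a beta - Rpower b beta <= - beta * Rpower eps (beta - 1) * D.
Proof.
  intros Hb He Ha Hbe HD HbaD.
  pose proof (Rpower_pos eps (beta - 1)) as Hpe.
  destruct (Rle_lt_dec b a) as [Hba|Hab].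
  - assert (Rpower a beta <= Rpower b beta) by (apply Rle_Rpower_l_nonpos; lra).
    assert (0 <= - beta * Rpower eps (beta - 1) * D) by (apply Rmult_le_pos; nra). lra.
  - destruct (MVT_cor2 (fun t => Rpower t beta) (fun t => beta * Rpower t (beta - 1)) a b)
      as [c [Hc Hcab]]; [exact Hab| |].
    { intros c Hc. apply derivable_pt_lim_power. lra. }
    assert (Rpower c (beta - 1) <= Rpower eps (beta - 1)) by (apply Rle_Rpower_l_nonpos; lra).
    assert (0 < Rpower c (beta - 1)) by apply Rpower_pos.
    simpl in Hc.
    assert (- beta * Rpower c (beta - 1) * (b - a) <= - beta * Rpower eps (beta - 1) * (b - a))
      by (apply Rmult_le_compat_r; nra).
    assert (- beta * Rpower eps (beta - 1) * (b - a) <= - beta * Rpower eps (beta - 1) * D)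
      by (apply Rmult_le_compat_l; nra).
    lra.
Qed.

Lemma holder_of_ordered (f : R -> R) (P : R -> Prop) C g :
  (forall a b, P a -> P b -> a < b -> Rabs (f b - f a) <= C * Rpower (b - a) g) ->
  forall t1 t2, P t1 -> P t2 -> Rabs (f t2 - f t1) <= C * hpow (Rabs (t2 - t1)) g.
Proof.
  intros H t1 t2 H1 H2. unfold hpow.
  destruct (Rtotal_order t1 t2) as [Hlt|[<-|Hgt]].
  - rewrite (Rabs_pos_eq (t2 - t1)) by lra. destruct (Rle_dec (t2 - t1) 0); [lra|]. now apply H.
  - rewrite !Rminus_eq_0, !Rabs_R0. destruct (Rle_dec 0 0); [rewrite Rmult_0_r|]; lra.
  - rewrite Rabs_minus_sym, (Rabs_minus_sym t2), (Rabs_pos_eq (t1 - t2)) by lra.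
    destruct (Rle_dec (t1 - t2) 0); [lra|]. now apply H.
Qed.

Definition rhs (beta : R) (v : zseq) (k : Z) : R := dlap (fun j => Gb beta (v j)) k.

Lemma rhs_expand beta v k :
  rhs beta v k = 2 * Rpower (v k) beta - Rpower (v (k - 1)%Z) beta - Rpower (v (k + 1)%Z) beta.
Proof. unfold rhs, dlap, Gb. ring. Qed.

Lemma rhs_le beta v k : rhs beta v k <= 2 * Rpower (v k) beta.
Proof.
  rewrite rhs_expand.
  pose proof (Rpower_pos (v (k - 1)%Z) beta). pose proof (Rpower_pos (v (k + 1)%Z) beta). lra.
Qed.

Lemma rhs_ge beta v k :
  - (Rpower (v (k - 1)%Z) beta + Rpower (v (k + 1)%Z) beta) <= rhs beta v k.
Proof. rewrite rhs_expand. pose proof (Rpower_pos (v k) beta). lra. Qed.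

Section Comparison.

Variables (beta eps tau T B : R) (v w : R -> zseq).
Hypothesis beta_neg : beta < 0.
Hypothesis eps_pos : 0 < eps.
Hypothesis B_nonneg : 0 <= B.
Hypothesis bounds : forall j t, tau <= t <= T ->
  eps <= v t j /\ eps <= w t j /\ w t j - v t j <= B.
Hypothesis v_solution : forall j t, tau <= t <= T ->
  is_derive (fun s => v s j) t (rhs beta (v t) j).
Hypothesis w_subsolution : forall j t, tau <= t <= T ->
  exists dw, is_derive (fun s => w s j) t dw /\ dw <= rhs beta (w t) j.
Hypothesis w_le_v_initially : forall j, w tau j <= v tau j.

Let lip := - beta * Rpower eps (beta - 1).
Let step := / (4 * lip).

Lemma lip_pos : 0 < lip.
Proof. unfold lip. pose proof (Rpower_pos eps (beta - 1)). nra. Qed.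

Lemma step_pos : 0 < step.
Proof. unfold step. pose proof lip_pos. apply Rinv_0_lt_compat. lra. Qed.

(* The lattice is infinite, so there is no maximum of [w - v] to follow; instead a
   bound [M] on [w - v] over a window of length [step] improves to [M / 2]. *)
Lemma comparison_halving t0 M : tau <= t0 -> 0 <= M ->
  (forall j, w t0 j <= v t0 j) ->
  (forall j s, t0 <= s <= T -> s <= t0 + step -> w s j - v s j <= M) ->
  forall j s, t0 <= s <= T -> s <= t0 + step -> w s j - v s j <= M / 2.
Proof.
  intros Ht0 HM Hinit Hwin j s Hs Hsh.
  pose proof lip_pos as Hlip. pose proof step_pos as Hstep.
  assert (Hgrowth : w s j - v s j <= 2 * lip * M * (s - t0)).
  { apply (increment_le_of_derive_le_where_pos (fun s => w s j - v s j));
      [lra|nra|specialize (Hinit j); lra|].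
    intros x Hx. destruct (w_subsolution j x ltac:(lra)) as [dw [Hdw Hdwle]].
    exists (dw - rhs beta (v x) j). split.
    { apply (is_derive_minus (fun s => w s j) (fun s => v s j));
        [exact Hdw|apply v_solution; lra]. }
    intro Hpos. rewrite !rhs_expand in *.
    destruct (bounds j x ltac:(lra)) as [Hv [Hw _]].
    destruct (bounds (j - 1)%Z x ltac:(lra)) as [Hvm [Hwm _]].
    destruct (bounds (j + 1)%Z x ltac:(lra)) as [Hvp [Hwp _]].
    assert (Rpower (w x j) beta <= Rpower (v x j) beta) by (apply Rle_Rpower_l_nonpos; lra).
    pose proof (Rpower_neg_lipschitz beta eps (v x (j - 1)%Z) (w x (j - 1)%Z) M
                  beta_neg eps_pos Hvm Hwm HM ltac:(apply Hwin; lra)).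
    pose proof (Rpower_neg_lipschitz beta eps (v x (j + 1)%Z) (w x (j + 1)%Z) M
                  beta_neg eps_pos Hvp Hwp HM ltac:(apply Hwin; lra)).
    unfold lip. lra. }
  assert (2 * lip * M * (s - t0) <= 2 * lip * M * step) by (apply Rmult_le_compat_l; nra).
  replace (M / 2) with (2 * lip * M * step) by (unfold step; field; lra). lra.
Qed.

Lemma comparison_window t0 : tau <= t0 -> (forall j, w t0 j <= v t0 j) ->
  forall j s, t0 <= s <= T -> s <= t0 + step -> w s j <= v s j.
Proof.
  intros Ht0 Hinit.
  assert (Hm : forall m j s, t0 <= s <= T -> s <= t0 + step -> w s j - v s j <= B / 2 ^ m).
  { induction m as [|m IH]; intros j s Hs Hsh.
    - replace (B / 2 ^ 0) with B by (simpl; field). apply bounds; lra.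
    - replace (B / 2 ^ S m) with (B / 2 ^ m / 2) by (simpl; field; apply pow_nonzero; lra).
      apply (comparison_halving t0); auto.
      apply Rdiv_le_0_compat; [exact B_nonneg|apply pow_lt; lra]. }
  intros j s Hs Hsh.
  pose proof (le_0_of_forall_le_div_pow2 _ B (fun m => Hm m j s Hs Hsh)). lra.
Qed.

Lemma comparison_principle : forall j t, tau <= t <= T -> w t j <= v t j.
Proof.
  pose proof step_pos as Hstep.
  assert (Hsteps : forall n j t, tau <= t <= T -> t <= tau + INR n * step -> w t j <= v t j).
  { induction n as [|n IH]; intros j t Ht Htn.
    - simpl in Htn. replace t with tau by lra. apply w_le_v_initially.
    - destruct (Rle_dec t (tau + INR n * step)) as [Hle|Hgt]; [now apply IH|].
      rewrite S_INR in Htn. pose proof (pos_INR n).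
      apply (comparison_window (tau + INR n * step)); try nra.
      intro i. apply IH; nra. }
  intros j t Ht. destruct (INR_unbounded ((t - tau) / step)) as [n Hn].
  apply (Hsteps n); [exact Ht|].
  apply (Rmult_lt_compat_r step) in Hn; [|exact Hstep].
  replace ((t - tau) / step * step) with (t - tau) in Hn by (field; lra). lra.
Qed.

End Comparison.

Fixpoint steps_to_level (d : R) (u0 : zseq) (n : nat) (j : Z) : nat :=
  if Rle_dec d (u0 j) then O
  else match n with O => O | S n => S (steps_to_level d u0 n (j + 1)) end.

Section StepsToLevel.

Variables (d : R) (u0 : zseq).

Lemma steps_to_level_le n j : (steps_to_level d u0 n j <= n)%nat.
Proof.
  revert j. induction n as [|n IH]; intro j; simpl; destruct (Rle_dec d (u0 j)); try lia.
  specialize (IH (j + 1)%Z). lia.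
Qed.

Lemma steps_to_level_at n j : d <= u0 j -> steps_to_level d u0 n j = O.
Proof. intro H. destruct n; simpl; destruct (Rle_dec d (u0 j)); tauto. Qed.

Lemma steps_to_level_below n j : ~ d <= u0 j ->
  steps_to_level d u0 (S n) j = S (steps_to_level d u0 n (j + 1)).
Proof. intro H. simpl. destruct (Rle_dec d (u0 j)); tauto. Qed.

Lemma steps_to_level_stable n m j : (m <= n)%nat -> d <= u0 (j + Z.of_nat m)%Z ->
  steps_to_level d u0 (S n) j = steps_to_level d u0 n j.
Proof.
  revert m j. induction n as [|n IH]; intros m j Hmn Hm.
  - replace m with O in Hm by lia. rewrite Z.add_0_r in Hm.
    now rewrite !steps_to_level_at.
  - destruct (Rle_dec d (u0 j)) as [Hj|Hj]; [now rewrite !steps_to_level_at|].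
    destruct m as [|m]; [rewrite Z.add_0_r in Hm; contradiction|].
    rewrite (steps_to_level_below (S n) j Hj), (steps_to_level_below n j Hj). f_equal.
    apply (IH m); [lia|]. now replace (j + 1 + Z.of_nat m)%Z with (j + Z.of_nat (S m))%Z by lia.
Qed.

Lemma steps_to_level_succ L j : PLd L d u0 -> ~ d <= u0 j ->
  (1 <= steps_to_level d u0 L j)%nat /\
  steps_to_level d u0 L (j + 1) = (steps_to_level d u0 L j - 1)%nat.
Proof.
  intros [_ HP] Hj. destruct (HP j) as [l [Hjl [HlL Hl]]].
  destruct L as [|L]; [lia|].
  rewrite steps_to_level_below by exact Hj. split; [lia|].
  rewrite Nat.sub_1_r, Nat.pred_succ.
  apply (steps_to_level_stable L (Z.to_nat (l - j - 1))); [lia|].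
  now replace (j + 1 + Z.of_nat (Z.to_nat (l - j - 1)))%Z with l by lia.
Qed.

End StepsToLevel.

Definition weight (L r : nat) : R := INR r * (INR L + 1 - INR r).

Lemma weight_bounds L r : (r <= S L)%nat -> 0 <= weight L r <= (INR L + 1) ^ 2.
Proof.
  intro H. apply le_INR in H. rewrite S_INR in H. pose proof (pos_INR r).
  unfold weight. split; nra.
Qed.

Lemma weight_second_difference L r : (1 <= r)%nat ->
  2 * weight L r - weight L (r - 1) - weight L (S r) = 2.
Proof.
  intro H. unfold weight. rewrite minus_INR, (S_INR r) by lia. change (INR 1) with 1. ring.
Qed.

Lemma weight_steps_to_level_pred L d u0 j : PLd L d u0 -> ~ d <= u0 j ->
  weight L (steps_to_level d u0 L (j - 1)) <= weight L (S (steps_to_level d u0 L j)).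
Proof.
  intros HP Hj. pose proof (steps_to_level_le d u0 L j).
  destruct (Rle_dec d (u0 (j - 1)%Z)) as [Hl|Hl].
  - rewrite steps_to_level_at by exact Hl.
    unfold weight at 1. simpl. rewrite Rmult_0_l. apply weight_bounds. lia.
  - destruct (steps_to_level_succ d u0 L (j - 1) HP Hl) as [H1 H2].
    replace (j - 1 + 1)%Z with j in H2 by lia.
    replace (steps_to_level d u0 L (j - 1)) with (S (steps_to_level d u0 L j)) by lia. lra.
Qed.

Section Barrier.

Variables (beta : R) (L : nat) (d : R).
Hypothesis beta_neg : beta < 0.
Hypothesis d_pos : 0 < d.

Definition hexp : R := 1 / (1 - beta).
Definition bmin : R := Rpower (d / 2) beta.
Definition bmax : R := bmin + d * (INR L + 1) ^ 2.
Definition slope : R := 2 * bmax / hexp.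
Definition tstar : R := Rmin 1 (Rpower (d / (2 * slope)) (1 / hexp)).
Definition cmin : R := Rpower bmax (1 / beta).

Lemma hexp_bounds : 0 < hexp < 1.
Proof.
  unfold hexp. split; [apply Rdiv_lt_0_compat; lra|].
  apply (Rmult_lt_reg_r (1 - beta)); [lra|]. field_simplify; lra.
Qed.

Lemma hexp_mul_beta : hexp * beta = hexp - 1.
Proof. unfold hexp. field. lra. Qed.

Lemma inv_beta_nonpos : 1 / beta <= 0.
Proof. unfold Rdiv. rewrite Rmult_1_l. left. now apply Rinv_lt_0_compat. Qed.

Lemma bmin_pos : 0 < bmin.
Proof. apply Rpower_pos. Qed.

Lemma bmin_le_bmax : bmin <= bmax.
Proof. unfold bmax. pose proof (pos_INR L). nra. Qed.

Lemma slope_pos : 0 < slope.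
Proof.
  pose proof hexp_bounds. pose proof bmin_pos. pose proof bmin_le_bmax.
  unfold slope. apply Rdiv_lt_0_compat; lra.
Qed.

Lemma tstar_bounds : 0 < tstar <= 1.
Proof. unfold tstar. split; [apply Rmin_glb_lt; [lra|apply Rpower_pos]|apply Rmin_l]. Qed.

Lemma slope_mul_tstar t : 0 < t <= tstar -> slope * Rpower t hexp <= d / 2.
Proof.
  intro Ht. pose proof hexp_bounds. pose proof slope_pos.
  assert (Hroot : Rpower t hexp <= d / (2 * slope)).
  { apply Rpower_le_of_le_root; [apply Rdiv_lt_0_compat; lra|lra|].
    pose proof (Rmin_r 1 (Rpower (d / (2 * slope)) (1 / hexp))). unfold tstar in Ht. lra. }
  apply (Rmult_le_compat_l slope) in Hroot; [|lra].
  replace (slope * (d / (2 * slope))) with (d / 2) in Hroot by (field; lra). exact Hroot.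
Qed.

Lemma cmin_bounds : 0 < cmin <= d / 2.
Proof.
  split; [apply Rpower_pos|]. unfold cmin.
  rewrite <- (Rpower_inv_Rpower (d / 2) beta) by lra. fold bmin.
  apply Rle_Rpower_l_nonpos; [apply inv_beta_nonpos|].
  pose proof bmin_pos. pose proof bmin_le_bmax. lra.
Qed.

Lemma cmin_pow : Rpower cmin beta = bmax.
Proof.
  pose proof bmin_pos. pose proof bmin_le_bmax.
  unfold cmin. apply Rpower_Rpower_inv; lra.
Qed.

Variable u0 : zseq.

(* The barrier is self-similar in time: [(a t^hexp)^beta = a^beta t^(hexp-1)] turns
   the subsolution inequality into a condition on [barrier_coef], which holds because
   [weight] is concave in the distance to the next site where [u0 >= d]. *)
Definition barrier_coef (j : Z) : R := bmin + d * weight L (steps_to_level d u0 L j).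
Definition barrier_amp (j : Z) : R := Rpower (barrier_coef j) (1 / beta).
Definition barrier (t : R) (j : Z) : R :=
  if Rle_dec d (u0 j) then d - slope * Rpower t hexp else barrier_amp j * Rpower t hexp.

Lemma barrier_coef_bounds j : bmin <= barrier_coef j <= bmax.
Proof.
  unfold barrier_coef, bmax.
  pose proof (weight_bounds L (steps_to_level d u0 L j)
                ltac:(pose proof (steps_to_level_le d u0 L j); lia)).
  split; nra.
Qed.

Lemma barrier_coef_concave j : PLd L d u0 -> ~ d <= u0 j ->
  2 * d <= 2 * barrier_coef j - barrier_coef (j - 1) - barrier_coef (j + 1).
Proof.
  intros HP Hj. unfold barrier_coef.
  destruct (steps_to_level_succ d u0 L j HP Hj) as [H1 ->].
  pose proof (weight_steps_to_level_pred L d u0 j HP Hj).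
  pose proof (weight_second_difference L _ H1). nra.
Qed.

Lemma barrier_amp_bounds j : cmin <= barrier_amp j <= d / 2.
Proof.
  pose proof (barrier_coef_bounds j). pose proof bmin_pos. pose proof inv_beta_nonpos.
  unfold barrier_amp, cmin. split; [apply Rle_Rpower_l_nonpos; lra|].
  rewrite <- (Rpower_inv_Rpower (d / 2) beta) by lra. fold bmin.
  apply Rle_Rpower_l_nonpos; lra.
Qed.

Lemma barrier_at_level t j : d <= u0 j -> barrier t j = d - slope * Rpower t hexp.
Proof. intro Hj. unfold barrier. now destruct (Rle_dec d (u0 j)). Qed.

Lemma barrier_below_level t j : ~ d <= u0 j -> barrier t j = barrier_amp j * Rpower t hexp.
Proof. intro Hj. unfold barrier. now destruct (Rle_dec d (u0 j)). Qed.

Lemma barrier_pow_below_level t j : ~ d <= u0 j ->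
  Rpower (barrier t j) beta = barrier_coef j * Rpower t (hexp - 1).
Proof.
  intro Hj. rewrite barrier_below_level by exact Hj.
  pose proof (barrier_coef_bounds j). pose proof bmin_pos.
  unfold barrier_amp. rewrite Rpower_mult_Rpower by apply Rpower_pos.
  now rewrite Rpower_Rpower_inv, hexp_mul_beta by lra.
Qed.

Lemma barrier_at_level_bounds t j : 0 < t <= tstar -> d <= u0 j ->
  d / 2 <= barrier t j <= d.
Proof.
  intros Ht Hj. rewrite barrier_at_level by exact Hj.
  pose proof (slope_mul_tstar t Ht). pose proof slope_pos. pose proof (Rpower_pos t hexp).
  nra.
Qed.

Lemma barrier_pow_le t j : 0 < t <= tstar ->
  Rpower (barrier t j) beta <= barrier_coef j * Rpower t (hexp - 1).
Proof.
  intros Ht. pose proof tstar_bounds. pose proof hexp_bounds.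
  destruct (Rle_dec d (u0 j)) as [Hj|Hj]; [|rewrite barrier_pow_below_level; lra].
  pose proof (barrier_at_level_bounds t j Ht Hj).
  assert (Rpower (barrier t j) beta <= bmin) by (apply Rle_Rpower_l_nonpos; lra).
  assert (1 <= Rpower t (hexp - 1)) by (apply Rpower_ge_1_of_le_1; lra).
  pose proof (barrier_coef_bounds j). pose proof bmin_pos. nra.
Qed.

Lemma barrier_ge t j : 0 < t <= tstar -> cmin * Rpower t hexp <= barrier t j.
Proof.
  intro Ht. pose proof tstar_bounds. pose proof cmin_bounds. pose proof hexp_bounds.
  pose proof (Rpower_pos t hexp).
  destruct (Rle_dec d (u0 j)) as [Hj|Hj].
  - pose proof (barrier_at_level_bounds t j Ht Hj).
    assert (Rpower t hexp <= 1) by (apply Rpower_le_1_of_le_1; lra). nra.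
  - rewrite barrier_below_level by exact Hj. pose proof (barrier_amp_bounds j). nra.
Qed.

Lemma barrier_le t j : 0 < t <= tstar -> barrier t j <= d.
Proof.
  intro Ht. pose proof tstar_bounds. pose proof hexp_bounds.
  destruct (Rle_dec d (u0 j)) as [Hj|Hj]; [now apply barrier_at_level_bounds|].
  rewrite barrier_below_level by exact Hj. pose proof (barrier_amp_bounds j).
  pose proof cmin_bounds. pose proof (Rpower_pos t hexp).
  assert (Rpower t hexp <= 1) by (apply Rpower_le_1_of_le_1; lra). nra.
Qed.

Lemma barrier_subsolution t j : PLd L d u0 -> 0 < t <= tstar ->
  exists db, is_derive (fun s => barrier s j) t db /\ db <= rhs beta (barrier t) j.
Proof.
  intros HP Ht. pose proof hexp_bounds. pose proof (Rpower_pos t (hexp - 1)).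
  pose proof (barrier_pow_le t (j - 1) Ht). pose proof (barrier_pow_le t (j + 1) Ht).
  pose proof (barrier_coef_bounds (j - 1)). pose proof (barrier_coef_bounds (j + 1)).
  rewrite rhs_expand.
  destruct (Rle_dec d (u0 j)) as [Hj|Hj].
  - eexists. split.
    + apply (is_derive_ext (fun s => d - slope * Rpower s hexp));
        [intro s; now rewrite barrier_at_level|].
      apply (is_derive_minus (fun _ => d) (fun s => slope * Rpower s hexp));
        [apply is_derive_const|].
      apply (is_derive_scal (fun s => Rpower s hexp)), is_derive_Rpower. lra.
    + unfold minus, plus, opp, zero. simpl.
      pose proof (Rpower_pos (barrier t j) beta).
      replace (slope * (hexp * Rpower t (hexp - 1))) with (2 * bmax * Rpower t (hexp - 1))
        by (unfold slope; field; lra).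
      nra.
  - exists (barrier_amp j * (hexp * Rpower t (hexp - 1))). split.
    + apply (is_derive_ext (fun s => barrier_amp j * Rpower s hexp));
        [intro s; now rewrite barrier_below_level|].
      apply (is_derive_scal (fun s => Rpower s hexp)), is_derive_Rpower. lra.
    + rewrite barrier_pow_below_level by exact Hj.
      pose proof (barrier_amp_bounds j). pose proof cmin_bounds.
      pose proof (barrier_coef_concave j HP Hj).
      assert (barrier_amp j * hexp <= 2 * d) by nra.
      assert (barrier_amp j * (hexp * Rpower t (hexp - 1)) <= 2 * d * Rpower t (hexp - 1)) by nra.
      nra.
Qed.

End Barrier.

Definition kup (beta : R) : R := Rpower (2 * (1 - beta)) (hexp beta).

Section Solution.

Variables (beta : R) (L : nat) (d : R) (u0 : zseq) (delta : R) (u : R -> zseq).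
Hypothesis beta_neg : beta < 0.
Hypothesis d_pos : 0 < d.
Hypothesis u0_PLd : PLd L d u0.
Hypothesis delta_pos : 0 < delta.
Hypothesis u_solution : is_solution beta (fun k => Rmax (u0 k) delta) u.
Hypothesis u_ge_delta : forall t k, 0 <= t -> delta <= u t k.

Lemma sol_is_derive k t : 0 < t -> is_derive (fun s => u s k) t (rhs beta (u t) k).
Proof. destruct u_solution as [_ [_ [_ H]]]. intro Ht. apply (H k t Ht). Qed.

Lemma sol_near_0 k t : 0 < t ->
  forall eps, 0 < eps -> exists s, 0 < s < t /\ Rabs (u s k - u 0 k) <= eps.
Proof.
  destruct u_solution as [_ [Hcont _]]. intros Ht eps He.
  destruct (Hcont 0 (Rle_refl 0) eps He) as [eta [Heta Hnear]].
  pose proof (Rmin_l (t / 2) (eta / 2)). pose proof (Rmin_r (t / 2) (eta / 2)).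
  assert (0 < Rmin (t / 2) (eta / 2)) by (apply Rmin_glb_lt; lra).
  exists (Rmin (t / 2) (eta / 2)). split; [lra|].
  apply Hnear; [lra|]. rewrite Rminus_0_r, Rabs_pos_eq; lra.
Qed.

Lemma sol_le_at_0 k t A : 0 < t -> (forall s, 0 < s < t -> u s k <= A) -> u 0 k <= A.
Proof.
  intros Ht H. apply (le_of_forall_near (fun s => u s k) 0 A (fun s => 0 < s < t));
    [now apply sol_near_0|exact H].
Qed.

Lemma sol_ge_at_0 k t A : 0 < t -> (forall s, 0 < s < t -> A <= u s k) -> A <= u 0 k.
Proof.
  intros Ht H. enough (- u 0 k <= - A) by lra.
  apply (le_of_forall_near (fun s => - u s k) 0 (- A) (fun s => 0 < s < t)).
  - intros eps He. destruct (sol_near_0 k t Ht eps He) as [s [Hs Habs]].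
    exists s. split; [exact Hs|].
    replace (- u s k - - u 0 k) with (- (u s k - u 0 k)) by ring. now rewrite Rabs_Ropp.
  - intros s Hs. specialize (H s Hs). lra.
Qed.

Lemma sol_drop_at_level j tau : 0 < tau -> d <= u0 j ->
  d - 2 * Rpower delta beta * tau <= u tau j.
Proof.
  intros Htau Hj. pose proof (Rpower_pos delta beta).
  assert (Hinit : d <= u 0 j).
  { destruct u_solution as [_ [_ [H0 _]]]. rewrite H0. pose proof (Rmax_l (u0 j) delta). lra. }
  enough (u 0 j <= u tau j + 2 * Rpower delta beta * tau) by lra.
  apply (sol_le_at_0 j tau); [exact Htau|]. intros s Hs.
  assert (- 2 * Rpower delta beta * (tau - s) <= u tau j - u s j); [|nra].
  apply (increment_ge_of_derive_ge (fun x => u x j)); [lra|]. intros x Hx.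
  exists (rhs beta (u x) j). split; [apply sol_is_derive; lra|].
  pose proof (rhs_ge beta (u x) j).
  assert (Rpower (u x (j - 1)%Z) beta <= Rpower delta beta)
    by (apply Rle_Rpower_l_nonpos; [lra|split; [lra|apply u_ge_delta; lra]]).
  assert (Rpower (u x (j + 1)%Z) beta <= Rpower delta beta)
    by (apply Rle_Rpower_l_nonpos; [lra|split; [lra|apply u_ge_delta; lra]]).
  lra.
Qed.

Lemma barrier_le_sol_initially tau : 0 < tau <= tstar beta L d ->
  d / 2 * Rpower tau (hexp beta) <= delta ->
  2 * Rpower delta beta * tau <= slope beta L d * Rpower tau (hexp beta) ->
  forall j, barrier beta L d u0 tau j <= u tau j.
Proof.
  intros Htau Hsmall Hslow j. pose proof (u_ge_delta tau j ltac:(lra)).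
  destruct (Rle_dec d (u0 j)) as [Hj|Hj].
  - rewrite barrier_at_level by exact Hj.
    pose proof (sol_drop_at_level j tau ltac:(lra) Hj). lra.
  - rewrite barrier_below_level by exact Hj.
    pose proof (barrier_amp_bounds beta L d beta_neg d_pos u0 j).
    pose proof (Rpower_pos tau (hexp beta)). nra.
Qed.

Lemma barrier_le_sol tau : 0 < tau <= tstar beta L d ->
  d / 2 * Rpower tau (hexp beta) <= delta ->
  2 * Rpower delta beta * tau <= slope beta L d * Rpower tau (hexp beta) ->
  forall j t, tau <= t <= tstar beta L d -> barrier beta L d u0 t j <= u t j.
Proof.
  intros Htau Hsmall Hslow.
  pose proof (cmin_bounds beta L d beta_neg d_pos). pose proof (hexp_bounds beta beta_neg).
  pose proof (Rpower_pos tau (hexp beta)).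
  apply (comparison_principle beta (cmin beta L d * Rpower tau (hexp beta)) tau
           (tstar beta L d) d u (barrier beta L d u0)); try lra.
  - apply Rmult_lt_0_compat; lra.
  - intros j t Ht.
    assert (Rpower tau (hexp beta) <= Rpower t (hexp beta)) by (apply Rle_Rpower_l; lra).
    pose proof (u_ge_delta t j ltac:(lra)).
    pose proof (barrier_ge beta L d beta_neg d_pos u0 t j ltac:(lra)).
    pose proof (barrier_le beta L d beta_neg d_pos u0 t j ltac:(lra)).
    repeat split; nra.
  - intros j t Ht. apply sol_is_derive. lra.
  - intros j t Ht. apply barrier_subsolution; auto. lra.
  - now apply barrier_le_sol_initially.
Qed.

Lemma small_time_exists : exists tau, 0 < tau <= tstar beta L d /\
  d / 2 * Rpower tau (hexp beta) <= delta /\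
  2 * Rpower delta beta * tau <= slope beta L d * Rpower tau (hexp beta).
Proof.
  pose proof (hexp_bounds beta beta_neg). pose proof (tstar_bounds beta L d).
  pose proof (slope_pos beta L d beta_neg d_pos). pose proof (Rpower_pos delta beta).
  destruct (Rpower_eventually_le (hexp beta) (2 * delta / d)) as [t1 [Ht1 Hp1]];
    [lra|apply Rdiv_lt_0_compat; lra|].
  destruct (Rpower_eventually_le (1 - hexp beta) (slope beta L d / (2 * Rpower delta beta)))
    as [t2 [Ht2 Hp2]]; [lra|apply Rdiv_lt_0_compat; lra|].
  set (tau := Rmin (tstar beta L d) (Rmin t1 t2)).
  assert (Htau : 0 < tau) by (apply Rmin_glb_lt; [lra|apply Rmin_glb_lt; lra]).
  assert (Htau_t : tau <= tstar beta L d) by apply Rmin_l.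
  assert (Htau12 : tau <= Rmin t1 t2) by apply Rmin_r.
  pose proof (Rmin_l t1 t2). pose proof (Rmin_r t1 t2).
  specialize (Hp1 tau ltac:(lra)). specialize (Hp2 tau ltac:(lra)).
  exists tau. split; [lra|split].
  - apply (Rmult_le_compat_l (d / 2)) in Hp1; [|lra].
    replace (d / 2 * (2 * delta / d)) with delta in Hp1 by (field; lra). exact Hp1.
  - assert (Htau_split : tau = Rpower tau (1 - hexp beta) * Rpower tau (hexp beta)).
    { rewrite <- Rpower_plus. replace (1 - hexp beta + hexp beta) with 1 by ring.
      now rewrite Rpower_1. }
    apply (Rmult_le_compat_l (2 * Rpower delta beta)) in Hp2; [|lra].
    replace (2 * Rpower delta beta * (slope beta L d / (2 * Rpower delta beta)))
      with (slope beta L d) in Hp2 by (field; lra).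
    pose proof (Rpower_pos tau (hexp beta)).
    rewrite Htau_split at 1. nra.
Qed.

Lemma sol_lower_bound j t : 0 < t <= tstar beta L d ->
  cmin beta L d * Rpower t (hexp beta) <= u t j.
Proof.
  intro Ht. destruct small_time_exists as [tau [Htau [Hsmall Hslow]]].
  destruct (Rle_dec tau t) as [Hle|Hlt].
  - pose proof (barrier_le_sol tau Htau Hsmall Hslow j t ltac:(lra)).
    pose proof (barrier_ge beta L d beta_neg d_pos u0 t j Ht). lra.
  - pose proof (cmin_bounds beta L d beta_neg d_pos). pose proof (hexp_bounds beta beta_neg).
    assert (Rpower t (hexp beta) <= Rpower tau (hexp beta)) by (apply Rle_Rpower_l; lra).
    pose proof (Rpower_pos t (hexp beta)). pose proof (u_ge_delta t j ltac:(lra)). nra.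
Qed.

Lemma sol_pow_le j t : 0 < t <= tstar beta L d ->
  Rpower (u t j) beta <= bmax beta L d * Rpower t (hexp beta - 1).
Proof.
  intro Ht. pose proof (cmin_bounds beta L d beta_neg d_pos).
  rewrite <- (cmin_pow beta L d beta_neg d_pos), <- (hexp_mul_beta beta beta_neg),
    <- Rpower_mult_Rpower by lra.
  apply Rle_Rpower_l_nonpos; [lra|split; [|now apply sol_lower_bound]].
  apply Rmult_lt_0_compat; [lra|apply Rpower_pos].
Qed.

Lemma sol_pow_increment k a b : 0 < a < b ->
  Rpower (u b k) (1 - beta) - Rpower (u a k) (1 - beta) <= 2 * (1 - beta) * (b - a).
Proof.
  intros Hab. set (p := 1 - beta).
  apply (increment_le_of_derive_le (fun s => Rpower (u s k) p)); [lra|].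
  intros x Hx. pose proof (u_ge_delta x k ltac:(lra)).
  eexists. split.
  { apply (is_derive_comp (fun y => Rpower y p) (fun s => u s k));
      [apply is_derive_Rpower; lra|apply sol_is_derive; lra]. }
  change (rhs beta (u x) k * (p * Rpower (u x k) (p - 1)) <= 2 * p).
  assert (Hone : Rpower (u x k) beta * Rpower (u x k) (p - 1) = 1).
  { rewrite <- Rpower_plus. replace (beta + (p - 1)) with 0 by (unfold p; ring).
    apply Rpower_O; lra. }
  pose proof (rhs_le beta (u x) k). pose proof (Rpower_pos (u x k) (p - 1)).
  assert (rhs beta (u x) k * (p * Rpower (u x k) (p - 1))
            <= 2 * Rpower (u x k) beta * (p * Rpower (u x k) (p - 1)))
    by (apply Rmult_le_compat_r; unfold p in *; nra).
  assert (2 * Rpower (u x k) beta * (p * Rpower (u x k) (p - 1)) = 2 * p)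
    by (transitivity (2 * p * (Rpower (u x k) beta * Rpower (u x k) (p - 1)));
        [ring|rewrite Hone; ring]).
  lra.
Qed.

Lemma sol_increment_upper_pos k a b : 0 < a < b ->
  u b k - u a k <= kup beta * Rpower (b - a) (hexp beta).
Proof.
  intros Hab. set (p := 1 - beta). pose proof (hexp_bounds beta beta_neg).
  assert (Hhexp : hexp beta = 1 / p) by reflexivity.
  assert (Hua : 0 < u a k) by (pose proof (u_ge_delta a k ltac:(lra)); lra).
  assert (Hub : 0 < u b k) by (pose proof (u_ge_delta b k ltac:(lra)); lra).
  pose proof (sol_pow_increment k a b Hab) as Hp. fold p in Hp.
  assert (Hb : u b k <= Rpower (Rpower (u a k) p + 2 * p * (b - a)) (1 / p)).
  { rewrite <- (Rpower_inv_Rpower (u b k) p) by (unfold p; lra).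
    apply Rle_Rpower_l; [rewrite <- Hhexp; lra|split; [apply Rpower_pos|lra]]. }
  pose proof (Rpower_plus_le (Rpower (u a k) p) (2 * p * (b - a)) (1 / p)
                (Rpower_pos _ _) ltac:(unfold p; nra) ltac:(rewrite <- Hhexp; lra)) as Hsub.
  rewrite Rpower_inv_Rpower, <- Rpower_mult_distr in Hsub by (unfold p; lra).
  unfold kup. rewrite Hhexp. fold p. lra.
Qed.

Lemma sol_increment_upper k a b : 0 <= a < b ->
  u b k - u a k <= kup beta * Rpower (b - a) (hexp beta).
Proof.
  intros Hab. destruct (Req_dec a 0) as [->|Ha]; [|apply sol_increment_upper_pos; lra].
  enough (u b k - kup beta * Rpower (b - 0) (hexp beta) <= u 0 k) by lra.
  apply (sol_ge_at_0 k b); [lra|]. intros s Hs.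
  pose proof (sol_increment_upper_pos k s b ltac:(lra)).
  assert (Rpower (b - s) (hexp beta) <= Rpower (b - 0) (hexp beta))
    by (apply Rle_Rpower_l; pose proof (hexp_bounds beta beta_neg); lra).
  pose proof (Rpower_pos (2 * (1 - beta)) (hexp beta)). unfold kup in *. nra.
Qed.

Lemma sol_increment_lower_pos k a b : 0 < a < b -> b <= tstar beta L d ->
  - slope beta L d * Rpower (b - a) (hexp beta) <= u b k - u a k.
Proof.
  intros Hab Hbt.
  pose proof (hexp_bounds beta beta_neg). pose proof (slope_pos beta L d beta_neg d_pos).
  assert (Hmono : 0 * (b - a) <= (u b k + slope beta L d * Rpower b (hexp beta))
                               - (u a k + slope beta L d * Rpower a (hexp beta))).
  { apply (increment_ge_of_derive_ge (fun s => u s k + slope beta L d * Rpower s (hexp beta)));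
      [lra|]. intros x Hx.
    eexists. split.
    { apply (is_derive_plus (fun s => u s k) (fun s => slope beta L d * Rpower s (hexp beta)));
        [apply sol_is_derive; lra|].
      apply (is_derive_scal (fun s => Rpower s (hexp beta))), is_derive_Rpower. lra. }
    change (0 <= rhs beta (u x) k + slope beta L d * (hexp beta * Rpower x (hexp beta - 1))).
    replace (slope beta L d * (hexp beta * Rpower x (hexp beta - 1)))
      with (2 * bmax beta L d * Rpower x (hexp beta - 1)) by (unfold slope; field; lra).
    pose proof (rhs_ge beta (u x) k).
    pose proof (sol_pow_le (k - 1) x ltac:(lra)). pose proof (sol_pow_le (k + 1) x ltac:(lra)).
    lra. }
  pose proof (Rpower_plus_le (b - a) a (hexp beta) ltac:(lra) ltac:(lra) ltac:(lra)) as Hsub.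
  replace (b - a + a) with b in Hsub by ring.
  assert (slope beta L d * Rpower b (hexp beta)
            <= slope beta L d * (Rpower (b - a) (hexp beta) + Rpower a (hexp beta)))
    by (apply Rmult_le_compat_l; lra).
  lra.
Qed.

Lemma sol_increment_lower k a b : 0 <= a < b -> b <= tstar beta L d ->
  - slope beta L d * Rpower (b - a) (hexp beta) <= u b k - u a k.
Proof.
  intros Hab Hbt. destruct (Req_dec a 0) as [->|Ha]; [|apply sol_increment_lower_pos; lra].
  enough (u 0 k <= u b k + slope beta L d * Rpower (b - 0) (hexp beta)) by lra.
  apply (sol_le_at_0 k b); [lra|]. intros s Hs.
  pose proof (sol_increment_lower_pos k s b ltac:(lra) Hbt).
  assert (Rpower (b - s) (hexp beta) <= Rpower (b - 0) (hexp beta))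
    by (apply Rle_Rpower_l; pose proof (hexp_bounds beta beta_neg); lra).
  pose proof (slope_pos beta L d beta_neg d_pos). nra.
Qed.

Lemma sol_holder k a b : 0 <= a < b -> b <= tstar beta L d ->
  Rabs (u b k - u a k) <= (kup beta + slope beta L d) * Rpower (b - a) (hexp beta).
Proof.
  intros Hab Hbt.
  pose proof (sol_increment_upper k a b Hab). pose proof (sol_increment_lower k a b Hab Hbt).
  pose proof (Rpower_pos (b - a) (hexp beta)). pose proof (Rpower_pos (2 * (1 - beta)) (hexp beta)).
  pose proof (slope_pos beta L d beta_neg d_pos). unfold kup in *.
  apply Rabs_le. split; nra.
Qed.

End Solution.

Theorem corollaryA11 (beta : R) (L : nat) (d : R) :
  beta < 0 -> 0 < d ->
  exists tstar C : R, 0 < tstar /\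
    forall (u0 : zseq), PLd L d u0 ->
    forall (delta : R), 0 < delta ->
    forall (u : R -> zseq),
      is_solution beta (fun k => Rmax (u0 k) delta) u ->
      (forall t k, 0 <= t ->
         delta <= u t k <= supnorm (fun j => Rmax (u0 j) delta)) ->
      forall t1 t2 k, 0 <= t1 <= tstar -> 0 <= t2 <= tstar ->
        Rabs (u t2 k - u t1 k) <= C * hpow (Rabs (t2 - t1)) (1 / (1 - beta)).
Proof.
  intros Hbeta Hd.
  exists (tstar beta L d), (kup beta + slope beta L d).
  split; [exact (proj1 (tstar_bounds beta L d))|].
  intros u0 HP delta Hdelta u Hsol Hbounds t1 t2 k.
  apply (holder_of_ordered (fun t => u t k) (fun t => 0 <= t <= tstar beta L d)).
  intros a b Ha Hb Hab.
  apply (sol_holder beta L d u0 delta u); try assumption; [|lra|lra].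
  intros t j Ht. apply Hbounds, Ht.
Qed.
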